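(* Let $\mathcal{H}$ be a real Hilbert space, let $A_1, A_2:\mathcal{H}\to 2^{\mathcal{H}}$ be maximally monotone, let $B:\mathcal{H}\to\mathcal{H}$ be monotone and $L$-Lipschitz continuous ($L>0$), let $C:\mathcal{H}\to\mathcal{H}$ be $\beta$-cocoercive ($\beta>0$), and assume that $\mathrm{zer}(A_1+A_2+B+C)\neq\emptyset$. Let $\lambda>0$ and $\gamma\in\left(0,\frac{\lambda\beta}{\beta+\lambda(2\beta L+1)}\right)$. Let $x_0,x_{-1},u_0\in\mathcal{H}$ and define for $n\ge0$ $$\begin{aligned}x_{n+1}&=J_{\gamma A_2}\big(x_n-\gamma u_n-\gamma(2Bx_n-Bx_{n-1})-\gamma Cx_n\big),\\ y_{n+1}&=J_{\lambda A_1}(2x_{n+1}-x_n+\lambda u_n),\\ u_{n+1}&=u_n+\tfrac{1}{\lambda}(2x_{n+1}-x_n-y_{n+1}).\end{aligned}$$ Then $\{x_n\}$ converges weakly to a point $\bar x\in\mathrm{zer}(A_1+A_2+B+C)$.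
   Context: $J_{\gamma A}=(\mathrm{Id}+\gamma A)^{-1}$ denotes the resolvent of a maximally monotone operator $A$. $\mathrm{zer}(T)=\{x:0\in Tx\}$. $C$ is $\beta$-cocoercive if $\langle x-y,Cx-Cy\rangle\ge\beta\|Cx-Cy\|^2$ for all $x,y$. *)

From HB Require Import structures.
From mathcomp Require Import all_boot all_order all_algebra.
From mathcomp Require Import all_classical all_reals topology normedtype sequences.
Set Implicit Arguments. Unset Strict Implicit. Unset Printing Implicit Defensive.
Import Order.TTheory GRing.Theory Num.Theory.
Import numFieldNormedType.Exports.
Local Open Scope classical_set_scope.
Local Open Scope ring_scope.

Record hilbert (R : realType) (H : lmodType R) := Hilbert {
  ip : H -> H -> R;
  ip_sym : forall x y, ip x y = ip y x;
  ip_linl : forall (a : R) (x y z : H), ip (a *: x + y) z = a * ip x z + ip y z;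
  ip_ge0 : forall x, 0 <= ip x x;
  ip_eq0 : forall x, ip x x = 0 -> x = 0;
  ip_complete : forall u : nat -> H,
    (forall e : R, 0 < e -> exists N : nat, forall m n : nat, (N <= m)%N -> (N <= n)%N ->
        Num.sqrt (ip (u m - u n) (u m - u n)) < e) ->
    exists l : H, (fun n => Num.sqrt (ip (u n - l) (u n - l))) @ \oo --> (0 : R)
}.

Section Ops.
Context (R : realType) (H : lmodType R) (I : hilbert H).

Definition hnorm (x : H) : R := Num.sqrt (ip I x x).

(* set-valued operators are represented by their graphs: A x u  <->  u \in A x *)
Definition monotone_op (A : H -> H -> Prop) :=
  forall x y u v, A x u -> A y v -> 0 <= ip I (x - y) (u - v).

Definition maximally_monotone (A : H -> H -> Prop) :=
  monotone_op A /\
  forall x u, (forall y v, A y v -> 0 <= ip I (x - y) (u - v)) -> A x u.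

Definition monotone_fun (B : H -> H) := monotone_op (fun x u => u = B x).

Definition L_lipschitz (L : R) (B : H -> H) :=
  forall x y, hnorm (B x - B y) <= L * hnorm (x - y).

Definition cocoercive (beta : R) (C : H -> H) :=
  forall x y, beta * hnorm (C x - C y) ^+ 2 <= ip I (x - y) (C x - C y).

(* p = J_{gamma A} z  <->  z \in p + gamma A p *)
Definition resolvent (gamma : R) (A : H -> H -> Prop) (z p : H) :=
  exists a, A p a /\ z = p + gamma *: a.

Definition zer4 (A1 A2 : H -> H -> Prop) (B C : H -> H) (x : H) :=
  exists a1 a2, A1 x a1 /\ A2 x a2 /\ a1 + a2 + B x + C x = 0.

Definition weak_cvg (x : nat -> H) (l : H) :=
  forall y : H, (fun n => ip I (x n) y) @ \oo --> ip I l y.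

End Ops.

(* x_{n-1} for n >= 0, given x_{-1} = xm1 *)
Definition xprev (T : Type) (x : nat -> T) (xm1 : T) (n : nat) : T :=
  match n with 0 => xm1 | k.+1 => x k end.

(* Fix a primal-dual solution (z, w), i.e. w \in A1 z and -(w + B z + C z) \in A2 z.  The energy
     E_n = lyap (x_n - z) (u_n - w) - <x_n - z, B x_n - B x_(n-1)> + L/2 |x_n - x_(n-1)|^2,
   where lyap p q = |p|^2 / (2 gamma) + lambda |q|^2 / 2 - <p, q>, is nonnegative and, under the
   step-size condition, decreases by a positive multiple of |x_(n+1) - x_n|^2 + |u_(n+1) - u_n|^2.
   So the iterates are bounded and the increments and the residuals of both resolvent steps vanish.
   Weak cluster points are taken along ultrafilters on nat (bounded sequences have weak
   ultralimits by a Riesz representation argument), and maximal monotonicity makes each of them a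
   primal-dual solution.  Since lyap (x_n - z) (u_n - w) converges for every solution and
   lyap p q >= (1/gamma - 1/lambda) |p|^2 / 2, two cluster points cannot differ (Opial). *)

From HB Require Import structures.
From mathcomp Require Import all_boot all_order all_algebra.
From mathcomp Require Import all_classical all_reals topology normedtype sequences.
From mathcomp Require Import ring lra.
Import Order.TTheory GRing.Theory Num.Theory.
Import numFieldNormedType.Exports.
Local Open Scope classical_set_scope.
Local Open Scope ring_scope.
Set Implicit Arguments. Unset Strict Implicit. Unset Printing Implicit Defensive.

Section InnerProduct.
Context (R : realType) (H : lmodType R) (I : hilbert H).
Local Notation "''[' u , v ]" := (ip I u v) : ring_scope.
Local Notation "''[' u ]" := (ip I u u) : ring_scope.

Lemma ipDl x y z : '[x + y, z] = '[x, z] + '[y, z].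
Proof. by have := ip_linl I 1 x y z; rewrite scale1r mul1r. Qed.

Lemma ip0l z : '[0, z] = 0.
Proof. by have /eqP := ipDl 0 0 z; rewrite addr0 -subr_eq subrr eq_sym => /eqP. Qed.

Lemma ipZl a x z : '[a *: x, z] = a * '[x, z].
Proof. by have := ip_linl I a x 0 z; rewrite !addr0 ip0l addr0. Qed.

Lemma ipNl x z : '[- x, z] = - '[x, z].
Proof. by rewrite -scaleN1r ipZl mulN1r. Qed.

Lemma ipDr x y z : '[z, x + y] = '[z, x] + '[z, y].
Proof. by rewrite ip_sym ipDl !(ip_sym _ _ z). Qed.

Lemma ipZr a x z : '[z, a *: x] = a * '[z, x].
Proof. by rewrite ip_sym ipZl ip_sym. Qed.

Lemma ip0r z : '[z, 0] = 0.
Proof. by rewrite ip_sym ip0l. Qed.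

Lemma ipNr x z : '[z, - x] = - '[z, x].
Proof. by rewrite ip_sym ipNl ip_sym. Qed.

Lemma ip_ext x y : (forall t, '[x, t] = '[y, t]) -> x = y.
Proof.
move=> xy; apply/eqP; rewrite -subr_eq0; apply/eqP; apply: (@ip_eq0 _ _ I).
by rewrite ipDl ipNl xy subrr.
Qed.

End InnerProduct.

Ltac ip_expand := rewrite ?(ipDl, ipDr, ipNl, ipNr, ipZl, ipZr, ip0l, ip0r).

(* Orient every pair [ip I v u], [ip I u v] occurring in the goal the same way,
   so that [ring] sees a single atom for both. *)
Ltac ip_sym_merge I :=
  repeat match goal with
  | |- context [ip I ?v ?u] =>
      match goal with
      | |- context [ip I u v] =>
          tryif constr_eq u v then fail else rewrite (ip_sym I v u)
      end
  end.

Ltac ip_normalize I := ip_expand; ip_sym_merge I.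

(* An identity between vectors is checked on its inner products with an
   arbitrary vector, which turns it into an identity of real numbers. *)
Ltac vec_eq_by_ip I := apply: (@ip_ext _ _ I) => ?; ip_expand.

Section Norm.
Context (R : realType) (H : lmodType R) (I : hilbert H).
Local Notation "''[' u , v ]" := (ip I u v) : ring_scope.
Local Notation "''[' u ]" := (ip I u u) : ring_scope.

Lemma ip_young x y t : 0 < t -> 2 * '[x, y] <= t * '[x] + t^-1 * '[y].
Proof.
move=> t_gt0; have -> : t * '[x] + t^-1 * '[y] = 2 * '[x, y] + t^-1 * '[t *: x - y].
  by ip_normalize I; field; rewrite gt_eqF.
by rewrite lerDl; apply: mulr_ge0; [rewrite invr_ge0 ltW | exact: ip_ge0].
Qed.

Lemma cauchy_schwarz x y : '[x, y] ^+ 2 <= '[x] * '[y].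
Proof.
have [y0|y_neq0] := eqVneq '[y] 0; first by rewrite (ip_eq0 y0) !ip0r expr0n mulr0.
have y_gt0 : 0 < '[y] by rewrite lt0r y_neq0 ip_ge0.
have key : '['[y] *: x - '[x, y] *: y] = '[y] * ('[x] * '[y] - '[x, y] ^+ 2).
  by ip_normalize I; ring.
by have := ip_ge0 I ('[y] *: x - '[x, y] *: y); rewrite key pmulr_rge0 // subr_ge0.
Qed.

Lemma ip_norm_le x y : `|'[x, y]| <= ('[x] + '[y]) / 2.
Proof.
have := ip_young x y ltr01; have := ip_young (- x) y ltr01.
by rewrite invr1 !mul1r !ipNl ipNr opprK ler_norml => ? ?; apply/andP; split; lra.
Qed.

Lemma ip_sqr_addr x y : '[x + y] <= 2 * '[x] + 2 * '[y].
Proof. have := ip_ge0 I (x - y); ip_normalize I; lra. Qed.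

Lemma ip_sqr_subr x y : '[x - y] <= 2 * '[x] + 2 * '[y].
Proof. by have := ip_sqr_addr x (- y); rewrite !ipNl !ipNr opprK. Qed.

End Norm.

Lemma cvg_from_ultra (T : Type) (V : topologicalType) (F : set_system T) {FF : Filter F}
  (f : T -> V) (l : V) :
  (forall U, UltraFilter U -> F `<=` U -> f @ U --> l) -> f @ F --> l.
Proof.
move=> fUl P lP; apply: contrapT => nFP.
pose C := ~` (f @^-1` P).
have CF : ProperFilter (within C F).
  apply: Build_ProperFilter_ex => Q; rewrite /within/= => FQ.
  apply: contrapT => nQ; apply: nFP; apply: filterS FQ => t CQ.
  by apply: contrapT => nPt; apply: nQ; exists t; exact: CQ.
have [U [UU CU]] := ultraFilterLemma CF.
have FU : F `<=` U by move=> Q FQ; apply: CU; rewrite /within/=; apply: filterS FQ => t Qt _.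
have UP : U (f @^-1` P) := fUl U UU FU P lP.
by have [t [Pt []]] := filter_ex (filterI UP (CU _ (withinT C FF))).
Qed.

Lemma ultra_bounded_cvg (R : realType) (T : Type) (U : set_system T) {UU : UltraFilter U}
  (a : T -> R) (M : R) : (forall t, `|a t| <= M) -> exists l : R, a @ U --> l.
Proof.
move=> aM.
have [l [_ cl]] : `[- M, M] `&` cluster (a @ U) !=set0.
  apply: segment_compact.
  by apply: nearW => t; rewrite /= in_itv /= -ler_norml.
exists l => P /= lP; have [//|UnP] := in_ultra_setVsetC (a @^-1` P) UU.
by have [t []] := cl (~` P) P UnP lP.
Qed.

Section NullFamilies.
Context (R : realFieldType) (T : Type) (F : set_system T) {FF : Filter F}.

Lemma cvg0D (a b : T -> R) :
  a @ F --> 0 -> b @ F --> 0 -> (a t + b t) @[t --> F] --> 0.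
Proof. by move=> a0 b0; rewrite -(addr0 0); apply: cvgD. Qed.

Lemma cvg0B (a b : T -> R) :
  a @ F --> 0 -> b @ F --> 0 -> (a t - b t) @[t --> F] --> 0.
Proof. by move=> a0 b0; rewrite -(subr0 0); apply: cvgB. Qed.

Lemma cvg0M (c : R) (a : T -> R) : a @ F --> 0 -> (c * a t) @[t --> F] --> 0.
Proof. by move=> a0; rewrite -(mulr0 c); apply: cvgM => //; exact: cvg_cst. Qed.

Lemma cvg0_le (a b : T -> R) : (forall t, 0 <= a t <= b t) -> b @ F --> 0 -> a @ F --> 0.
Proof.
by move=> ab b0; apply: (squeeze_cvgr (f := fun=> 0) (h := b) _ (cvg_cst 0) b0); apply: nearW.
Qed.

End NullFamilies.

Lemma cvg_perturb (R : realFieldType) (T : Type) (F : set_system T) {FF : Filter F}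
  (f g h : T -> R) (l : R) :
  (forall t, g t = f t + h t) -> f @ F --> l -> h @ F --> 0 -> g @ F --> l.
Proof.
move=> gfh fl h0; rewrite (funext gfh) -[X in _ --> X]addr0.
by apply: cvgD.
Qed.

Lemma lin_quad_ge0 (R : realFieldType) (a c : R) :
  (forall t, 0 <= t * c + t ^+ 2 * a) -> c = 0.
Proof.
move=> ge0; pose d := `|a| + 1.
have d_gt0 : 0 < d by rewrite /d; have := normr_ge0 a; lra.
have da_gt0 : 0 < d - a by rewrite /d; have := ler_norm a; lra.
have := ge0 (- c / d).
have -> : - c / d * c + (- c / d) ^+ 2 * a = - (c ^+ 2 / d ^+ 2 * (d - a)).
  by field; rewrite gt_eqF.
rewrite oppr_ge0 pmulr_lle0 // ler_pdivrMr ?exprn_gt0 // mul0r => c2_le0.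
by apply/eqP; rewrite -sqrf_eq0 eq_le c2_le0 sqr_ge0.
Qed.

Section WeakLimits.
Context (R : realType) (H : lmodType R) (I : hilbert H).
Local Notation "''[' u , v ]" := (ip I u v) : ring_scope.
Local Notation "''[' u ]" := (ip I u u) : ring_scope.

Lemma ip_cvg0 (T : Type) (F : set_system T) {FF : Filter F} (s t : T -> H) (K : R) :
  '[s n] @[n --> F] --> 0 -> (forall n, '[t n] <= K) -> '[s n, t n] @[n --> F] --> 0.
Proof.
move=> s0 tK; apply/cvgr0Pnorm_lt => e e_gt0.
have k_gt0 : 0 < `|K| + 1 by have := normr_ge0 K; lra.
apply: filterS (cvgr0_norm_lt _ s0 _ (divr_gt0 (exprn_gt0 2 e_gt0) k_gt0)) => n.
rewrite ger0_norm ?ip_ge0 // ltr_pdivlMr // => sn.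
have st : '[s n] * '[t n] <= '[s n] * (`|K| + 1).
  by apply: ler_wpM2l; [exact: ip_ge0 | have := ler_norm K; have := tK n; lra].
have : `|'[s n, t n]| ^+ 2 < e ^+ 2.
  by rewrite -normrX ger0_norm ?sqr_ge0 //; have := cauchy_schwarz I (s n) (t n); lra.
by have := normr_ge0 '[s n, t n]; nra.
Qed.

Lemma ip_cvgl (T : Type) (F : set_system T) {FF : Filter F} (s : T -> H) v h :
  '[s n - v] @[n --> F] --> 0 -> '[s n, h] @[n --> F] --> '[v, h].
Proof.
move=> sv; rewrite -[X in _ --> X]add0r.
have -> : (fun n => '[s n, h]) = (fun n => '[s n - v, h] + '[v, h]).
  by apply/funext => n; ip_expand; ring.
by apply: cvgD; [exact: (ip_cvg0 (t := fun=> h) sv (fun=> lexx _)) | exact: cvg_cst].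
Qed.

Section Riesz.
Variables (f : H -> R) (K : R).
Hypotheses (fD : forall h h', f (h + h') = f h + f h') (fZ : forall a h, f (a *: h) = a * f h).
Hypothesis fK : forall h, 2 * f h <= K + '[h].

Let Psi z := '[z] / 2 - f z.

(* The parallelogram law makes every minimising sequence of [Psi] a Cauchy sequence. *)
Lemma riesz_minimizing_seq : exists (zs : nat -> H) v,
  (forall j z, Psi (zs j) <= Psi z + harmonic j) /\ '[zs n - v] @[n --> \oo] --> 0.
Proof.
have Psi_lb : lbound (range Psi) (- K / 2).
  by move=> _ [z _ <-]; have := fK z; rewrite /Psi; lra.
have Psi_inf : has_inf (range Psi) by split; [exists (Psi 0), 0 | exists (- K / 2)].
pose m := inf (range Psi).
have m_le z : m <= Psi z by apply: ge_inf; [exists (- K / 2) | exists z].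
have /choice [zs zs_min] : forall j, exists z, Psi z < m + harmonic j.
  by move=> j; have [_ [z _ <-] ?] := inf_adherent (harmonic_gt0 j) Psi_inf; exists z.
have zs_cauchy i j : '[zs i - zs j] <= 4 * (harmonic i + harmonic j).
  have -> : '[zs i - zs j] =
      4 * Psi (zs i) + 4 * Psi (zs j) - 8 * Psi (2^-1 *: (zs i + zs j)).
    by rewrite /Psi fZ fD; ip_normalize I; field.
  by have := m_le (2^-1 *: (zs i + zs j)); have := zs_min i; have := zs_min j; lra.
have [v zs_v] : exists v, Num.sqrt '[zs n - v] @[n --> \oo] --> 0.
  apply: ip_complete => e e_gt0.
  have e2_gt0 : 0 < e ^+ 2 / 8 by rewrite divr_gt0 ?exprn_gt0.
  have [N _ hN] := cvgr_dist_lt _ _ cvg_harmonic _ e2_gt0.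
  exists N => i j iN jN; rewrite -(gtr0_norm e_gt0) -sqrtr_sqr ltr_sqrt ?exprn_gt0 //.
  have := hN _ iN; have := hN _ jN; have := zs_cauchy i j.
  rewrite !sub0r !normrN !ger0_norm ?harmonic_ge0 //; move: (harmonic i) (harmonic j) => a b.
  have e8 : e ^+ 2 / 8 * 8 = e ^+ 2 by rewrite divfK // pnatr_eq0.
  lra.
exists zs, v; split=> [j z|]; first by have := zs_min j; have := m_le z; lra.
rewrite -[X in _ --> X](mulr0 0).
rewrite (eq_cvg _ _ (g := fun n => Num.sqrt '[zs n - v] * Num.sqrt '[zs n - v])).
  exact: cvgM.
by move=> n; rewrite -expr2 sqr_sqrtr ?ip_ge0.
Qed.

Lemma riesz_representation : exists v, forall h, f h = '[v, h].
Proof.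
have [zs [v [zs_min zs_v]]] := riesz_minimizing_seq.
exists v => h; apply/eqP; rewrite eq_sym -subr_eq0; apply/eqP.
apply: (@lin_quad_ge0 _ ('[h] / 2)) => t.
pose g j := t * ('[zs j, h] - f h) + t ^+ 2 * ('[h] / 2) + harmonic j.
have g_ge0 j : 0 <= g j.
  have -> : g j = Psi (zs j + t *: h) - Psi (zs j) + harmonic j.
    by rewrite /g /Psi fD fZ; ip_normalize I; field.
  by have := zs_min j (zs j + t *: h); lra.
have g_cvg : g @ \oo --> t * ('[v, h] - f h) + t ^+ 2 * ('[h] / 2).
  rewrite -[X in _ --> X]addr0; apply: cvgD; last exact: cvg_harmonic.
  apply: cvgD; last exact: cvg_cst.
  apply: cvgM; first exact: cvg_cst.
  by apply: cvgB; [exact: ip_cvgl | exact: cvg_cst].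
by apply: (cvgr_to_ge g_cvg); apply: nearW.
Qed.

End Riesz.

Lemma weak_ultralimit (T : Type) (U : set_system T) {UU : UltraFilter U} (s : T -> H) (K : R) :
  (forall n, '[s n] <= K) ->
  exists v, forall h, '[s n, h] @[n --> U] --> '[v, h].
Proof.
move=> sK.
have /choice [f sf] : forall h, exists l : R, '[s n, h] @[n --> U] --> l.
  move=> h; apply: (ultra_bounded_cvg (M := (K + '[h]) / 2)) => n.
  by apply: le_trans (ip_norm_le I _ _) _; have := sK n; lra.
have f_lim h l : '[s n, h] @[n --> U] --> l -> f h = l.
  by move=> hl; apply: cvg_unique (sf h) hl.
have [v fv] : exists v, forall h, f h = '[v, h].
  apply: (riesz_representation (f := f) (K := K)) => [h h'|a h|h].
  - by apply: f_lim; under eq_fun do rewrite ipDr; apply: cvgD; exact: sf.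
  - by apply: f_lim; under eq_fun do rewrite ipZr; apply: cvgM; [exact: cvg_cst | exact: sf].
  - suff : f h <= (K + '[h]) / 2 by lra.
    apply: (cvgr_to_le (sf h)); apply: nearW => n.
    apply: le_trans (ler_norm _) _; apply: le_trans (ip_norm_le I _ _) _.
    by have := sK n; lra.
by exists v => h; rewrite -fv; exact: sf.
Qed.

End WeakLimits.

Section MaximalMonotone.
Context (R : realType) (H : lmodType R) (I : hilbert H).
Local Notation "''[' u , v ]" := (ip I u v) : ring_scope.
Local Notation "''[' u ]" := (ip I u u) : ring_scope.

(* Minty's trick: test the inequality at [w = xi - t (D xi - de)] and let the
   Lipschitz bound absorb the error for small [t]. *)
Lemma lipschitz_minty (D : H -> H) (K : R) xi de :
  (forall v w, '[D v - D w] <= K * '[v - w]) ->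
  (forall w, 0 <= '[xi - w, de - D w]) -> de = D xi.
Proof.
move=> DK mon; pose hh := D xi - de; pose t := (`|K| + 1)^-1.
have K1_gt0 : 0 < `|K| + 1 by have := normr_ge0 K; lra.
have t_gt0 : 0 < t by rewrite invr_gt0.
have Kt_lt1 : K * t ^+ 2 < 1.
  rewrite /t exprVn ltr_pdivrMr ?exprn_gt0 // mul1r.
  by have := ler_norm K; have := normr_ge0 K; nra.
pose w := xi - t *: hh.
have xiw : xi - w = t *: hh by rewrite /w opprB addrC subrK.
have := mon w; rewrite xiw ipZl pmulr_rge0 // => mon_w.
have := DK xi w; rewrite xiw ipZl ipZr mulrA -expr2 mulrA => lip_w.
have := ip_young I hh (D xi - D w) ltr01; rewrite invr1 !mul1r => young_w.
have : '[hh, de - D w] = - '[hh] + '[hh, D xi - D w] by rewrite /hh; ip_normalize I; ring.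
move=> split_w; rewrite split_w in mon_w.
have hh0 : '[hh] = 0.
  by apply/eqP; rewrite eq_le ip_ge0 andbT; have := ip_ge0 I hh; nra.
by apply/eqP; rewrite eq_sym -subr_eq0; apply/eqP/(ip_eq0 hh0).
Qed.

Lemma maximal_monotone_limit (A1 A2 : H -> H -> Prop) (D : H -> H) (K : R) xi om de :
  maximally_monotone I A1 -> maximally_monotone I A2 ->
  (forall v w, '[D v - D w] <= K * '[v - w]) ->
  (forall w1 v1 w2 v2 w3, A1 w1 v1 -> A2 w2 v2 ->
     0 <= '[xi - w1, om - v1] + '[xi - w2, - (om + de) - v2] + '[xi - w3, de - D w3]) ->
  [/\ A1 xi om, A2 xi (- (om + de)) & de = D xi].
Proof.
move=> [_ maxA1] [_ maxA2] DK lim.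
have A1xi : A1 xi om.
  apply: maxA1 => w1 v1 A1wv; rewrite leNgt; apply/negP => neg.
  have A2xi : A2 xi (- (om + de)).
    apply: maxA2 => w2 v2 A2wv.
    by have := lim w1 v1 w2 v2 xi A1wv A2wv; rewrite subrr ip0l; lra.
  by have := lim w1 v1 xi (- (om + de)) xi A1wv A2xi; rewrite subrr !ip0l; lra.
have A2xi : A2 xi (- (om + de)).
  apply: maxA2 => w2 v2 A2wv.
  by have := lim xi om w2 v2 xi A1xi A2wv; rewrite !subrr !ip0l; lra.
split=> //; apply: (lipschitz_minty DK) => w.
by have := lim xi om xi (- (om + de)) w A1xi A2xi; rewrite subrr !ip0l; lra.
Qed.

End MaximalMonotone.

Section Energy.
Context (R : realType) (H : lmodType R) (I : hilbert H).
Local Notation "''[' u , v ]" := (ip I u v) : ring_scope.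
Local Notation "''[' u ]" := (ip I u u) : ring_scope.
Variables (gamma lambda L beta : R).
Hypotheses (gamma_gt0 : 0 < gamma) (lambda_gt0 : 0 < lambda).
Hypotheses (L_gt0 : 0 < L) (beta_gt0 : 0 < beta).

Definition lyap (p q : H) := gamma^-1 / 2 * '[p] + lambda / 2 * '[q] - '[p, q].

Definition energy (p q b D : H) := lyap p q - '[p, b] + L / 2 * '[D].

Definition descent_coef1 := (gamma^-1 - lambda^-1 - 2 * L - beta^-1) / 2.
Definition descent_coef2 := lambda ^+ 2 / (2 * (2 * beta + lambda)).

Let mu := 2 * beta * lambda / (2 * beta + lambda).

Let beta_lambda_gt0 : 0 < 2 * beta + lambda.
Proof. by apply: addr_gt0 => //; apply: mulr_gt0. Qed.

Let mu_gt0 : 0 < mu.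
Proof. by apply: divr_gt0 => //; do 2![apply: mulr_gt0 => //]. Qed.

Let invL2_gt0 : 0 < (2 * L)^-1.
Proof. by rewrite invr_gt0 mulr_gt0. Qed.

Let invmu2_gt0 : 0 < (2 * mu)^-1.
Proof. by rewrite invr_gt0 mulr_gt0. Qed.

Let nonzero := (gt_eqF gamma_gt0, gt_eqF lambda_gt0, gt_eqF L_gt0, gt_eqF beta_gt0,
  gt_eqF beta_lambda_gt0).

(* The decrease of the energy is the sum of the five hypotheses and of three squares. *)
Lemma energy_descent p d q e b b' mb c D :
  0 <= '[p + d, - (gamma^-1 *: d) - q - mb + b' - b - c] ->
  0 <= '[p + 2 *: d - lambda *: e, q + e] ->
  0 <= '[p + d, mb] -> beta * '[c] <= '[p, c] -> '[b] <= L ^+ 2 * '[D] ->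
  energy (p + d) (q + e) b' d + descent_coef1 * '[d] + descent_coef2 * '[e]
    <= energy p q b D.
Proof.
move=> mon2 mon1 monB cocC lipB; rewrite -subr_ge0.
have -> : energy p q b D -
    (energy (p + d) (q + e) b' d + descent_coef1 * '[d] + descent_coef2 * '[e]) =
    '[p + d, - (gamma^-1 *: d) - q - mb + b' - b - c] + '[p + 2 *: d - lambda *: e, q + e]
    + '[p + d, mb] + ('[p, c] - beta * '[c]) + beta * '[c + (2 * beta)^-1 *: d]
    + (2 * L)^-1 * '[L *: d + b] + (2 * mu)^-1 * '[d - mu *: e]
    + (2 * L)^-1 * (L ^+ 2 * '[D] - '[b]).
  rewrite /energy /lyap /descent_coef1 /descent_coef2 /mu; ip_normalize I.
  by field; rewrite !nonzero.
have := mulr_ge0 (ltW beta_gt0) (ip_ge0 I (c + (2 * beta)^-1 *: d)).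
have := mulr_ge0 (ltW invL2_gt0) (ip_ge0 I (L *: d + b)).
have := mulr_ge0 (ltW invmu2_gt0) (ip_ge0 I (d - mu *: e)).
have : 0 <= (2 * L)^-1 * (L ^+ 2 * '[D] - '[b]).
  by apply: mulr_ge0; [exact: ltW | rewrite subr_ge0].
lra.
Qed.

Lemma energy_ge p q b D : '[b] <= L ^+ 2 * '[D] ->
  descent_coef1 * '[p] + descent_coef2 * '[q] <= energy p q b D.
Proof.
move=> lipB; rewrite -subr_ge0.
have -> : energy p q b D - (descent_coef1 * '[p] + descent_coef2 * '[q]) =
    (L / 2 + (4 * beta)^-1) * '[p] + (2 * L)^-1 * '[L *: p - b]
    + (2 * L)^-1 * (L ^+ 2 * '[D] - '[b]) + (2 * mu)^-1 * '[p - mu *: q].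
  rewrite /energy /lyap /descent_coef1 /descent_coef2 /mu; ip_normalize I.
  by field; rewrite !nonzero.
have : 0 < L / 2 + (4 * beta)^-1 by rewrite addr_gt0 ?divr_gt0 ?invr_gt0 ?mulr_gt0.
move/ltW/mulr_ge0/(_ (ip_ge0 I p)).
have := mulr_ge0 (ltW invL2_gt0) (ip_ge0 I (L *: p - b)).
have := mulr_ge0 (ltW invmu2_gt0) (ip_ge0 I (p - mu *: q)).
have : 0 <= (2 * L)^-1 * (L ^+ 2 * '[D] - '[b]).
  by apply: mulr_ge0; [exact: ltW | rewrite subr_ge0].
lra.
Qed.

Lemma lyap_ge p q : (gamma^-1 - lambda^-1) / 2 * '[p] <= lyap p q.
Proof.
rewrite -subr_ge0.
have -> : lyap p q - (gamma^-1 - lambda^-1) / 2 * '[p] = lambda / 2 * '[q - lambda^-1 *: p].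
  by rewrite /lyap; ip_normalize I; move: gamma^-1 => g; field; exact: lt0r_neq0.
by rewrite mulr_ge0 ?ip_ge0 ?divr_ge0 ?ltW.
Qed.

Lemma lyap_polar v w p0 q0 p1 q1 :
  lyap (v - p0) (w - q0) - lyap (v - p1) (w - q1) =
  '[v, (q0 - q1) - gamma^-1 *: (p0 - p1)] + '[w, (p0 - p1) - lambda *: (q0 - q1)]
  + (lyap p0 q0 - lyap p1 q1).
Proof. by rewrite /lyap; ip_normalize I; move: gamma^-1 => g; field. Qed.

End Energy.

Lemma resolvent_inclusion (R : realType) (H : lmodType R) (g : R) (A : H -> H -> Prop) z p :
  g != 0 -> resolvent g A z p -> A p (g^-1 *: (z - p)).
Proof. by move=> g0 [a [Apa ->]]; rewrite addrC addKr scalerA mulVf // scale1r. Qed.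

Section Algorithm.
Context (R : realType) (H : lmodType R) (I : hilbert H).
Local Notation "''[' u , v ]" := (ip I u v) : ring_scope.
Local Notation "''[' u ]" := (ip I u u) : ring_scope.
Variables (A1 A2 : H -> H -> Prop) (B C : H -> H) (L beta lambda gamma : R).
Variables (x y u : nat -> H) (xm1 : H).
Hypotheses (A1_max : maximally_monotone I A1) (A2_max : maximally_monotone I A2).
Hypotheses (B_mono : monotone_fun I B) (L_gt0 : 0 < L) (B_lip : L_lipschitz I L B).
Hypotheses (beta_gt0 : 0 < beta) (C_coco : cocoercive I beta C).
Hypothesis zer_nonempty : exists z, zer4 A1 A2 B C z.
Hypotheses (lambda_gt0 : 0 < lambda) (gamma_gt0 : 0 < gamma).
Hypothesis gamma_lt : gamma < lambda * beta / (beta + lambda * (2 * beta * L + 1)).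
Local Notation xp := (xprev x xm1).
Hypothesis x_step : forall n, resolvent gamma A2
  (x n - gamma *: u n - gamma *: (2 *: B (x n) - B (xp n)) - gamma *: C (x n)) (x n.+1).
Hypothesis y_step : forall n,
  resolvent lambda A1 (2 *: x n.+1 - x n + lambda *: u n) (y n.+1).
Hypothesis u_step : forall n, u n.+1 = u n + lambda^-1 *: (2 *: x n.+1 - x n - y n.+1).

Let gamma_neq0 : gamma != 0. Proof. exact: lt0r_neq0. Qed.
Let lambda_neq0 : lambda != 0. Proof. exact: lt0r_neq0. Qed.

Lemma B_lip_sqr v w : '[B v - B w] <= L ^+ 2 * '[v - w].
Proof.
rewrite -(ler_sqrt _ (mulr_ge0 (sqr_ge0 L) (ip_ge0 I (v - w)))) sqrtrM ?sqr_ge0 //.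
by rewrite sqrtr_sqr gtr0_norm //; exact: B_lip.
Qed.

Lemma C_coco_sqr v w : beta * '[C v - C w] <= '[v - w, C v - C w].
Proof. by have := C_coco v w; rewrite /hnorm sqr_sqrtr ?ip_ge0. Qed.

Lemma C_lip_sqr v w : '[C v - C w] <= beta^-2 * '[v - w].
Proof.
have beta_inv_gt0 : 0 < beta^-1 by rewrite invr_gt0.
have := ip_young I (v - w) (C v - C w) beta_inv_gt0; rewrite invrK.
have := C_coco_sqr v w; rewrite -subr_ge0 => coco young.
rewrite -subr_ge0 -(pmulr_rge0 _ beta_gt0).
have -> : beta * (beta^-2 * '[v - w] - '[C v - C w]) =
  (beta^-1 * '[v - w] + beta * '[C v - C w] - 2 * '[v - w, C v - C w])
  + 2 * ('[v - w, C v - C w] - beta * '[C v - C w]).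
  by field; exact: lt0r_neq0.
by rewrite addr_ge0 ?mulr_ge0 // subr_ge0.
Qed.

Let BC v := B v + C v.
Let K_BC := 2 * L ^+ 2 + 2 * beta^-2.

Let K_BC_gt0 : 0 < K_BC.
Proof.
by apply: addr_gt0; apply: mulr_gt0 => //; rewrite ?invr_gt0 exprn_gt0.
Qed.

Lemma BC_lip_sqr v w : '[BC v - BC w] <= K_BC * '[v - w].
Proof.
have -> : BC v - BC w = (B v - B w) + (C v - C w) by vec_eq_by_ip I; ring.
apply: le_trans (ip_sqr_addr I _ _) _.
by have := B_lip_sqr v w; have := C_lip_sqr v w; rewrite /K_BC; lra.
Qed.

Lemma BC_mono v w : 0 <= '[v - w, BC v - BC w].
Proof.
have -> : '[v - w, BC v - BC w] = '[v - w, B v - B w] + '[v - w, C v - C w].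
  by rewrite /BC; ip_normalize I; ring.
have := B_mono (erefl (B v)) (erefl (B w)); have := C_coco_sqr v w.
by have := mulr_ge0 (ltW beta_gt0) (ip_ge0 I (C v - C w)); lra.
Qed.

Let fwd n := x n - gamma *: u n - gamma *: (2 *: B (x n) - B (xp n)) - gamma *: C (x n).
Let a2 n := gamma^-1 *: (fwd n - x n.+1).

Lemma A2_iterate n : A2 (x n.+1) (a2 n).
Proof. exact: resolvent_inclusion gamma_neq0 (x_step n). Qed.

Lemma A1_iterate n : A1 (y n.+1) (u n.+1).
Proof.
have -> : u n.+1 = lambda^-1 *: (2 *: x n.+1 - x n + lambda *: u n - y n.+1).
  by rewrite u_step; vec_eq_by_ip I; field.
exact: resolvent_inclusion lambda_neq0 (y_step n).
Qed.

Definition primal_dual z w := A1 z w /\ A2 z (- (w + B z + C z)).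

Lemma primal_dual_exists : exists z w, primal_dual z w.
Proof.
have [z [a1 [a2' [A1z [A2z sum0]]]]] := zer_nonempty.
exists z, a1; split => //.
have -> : - (a1 + B z + C z) = a2' - (a1 + a2' + B z + C z) by vec_eq_by_ip I; ring.
by rewrite sum0 subr0.
Qed.

Lemma primal_dual_zer z w : primal_dual z w -> zer4 A1 A2 B C z.
Proof.
by move=> [A1z A2z]; exists w, (- (w + B z + C z)); split=> //; split=> //; vec_eq_by_ip I; ring.
Qed.

Let k1 := descent_coef1 gamma lambda L beta.
Let k2 := descent_coef2 lambda beta.

Lemma k1_gt0 : 0 < k1.
Proof.
have den_gt0 : 0 < beta + lambda * (2 * beta * L + 1).
  by rewrite addr_gt0 // mulr_gt0 // addr_gt0 // mulr_gt0 // mulr_gt0.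
move: gamma_lt; rewrite ltr_pdivlMr // => lt.
have -> : k1 = (lambda * beta - gamma * (beta + lambda * (2 * beta * L + 1)))
               / (2 * (gamma * lambda * beta)).
  by rewrite /k1 /descent_coef1; field; rewrite !lt0r_neq0.
by rewrite divr_gt0 ?subr_gt0 ?mulr_gt0 // mulrC.
Qed.

Lemma k2_gt0 : 0 < k2.
Proof.
apply: divr_gt0; first exact: exprn_gt0.
by apply: mulr_gt0 => //; apply: addr_gt0 => //; apply: mulr_gt0.
Qed.

Let En z w n :=
  energy I gamma lambda L (x n - z) (u n - w) (B (x n) - B (xp n)) (x n - xp n).

Lemma En_descent z w n : primal_dual z w ->
  En z w n.+1 + k1 * '[x n.+1 - x n] + k2 * '[u n.+1 - u n] <= En z w n.
Proof.
move=> [A1z A2z]; rewrite /En /=.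
have ex : x n.+1 - z = (x n - z) + (x n.+1 - x n) by vec_eq_by_ip I; ring.
have eu : u n.+1 - w = (u n - w) + (u n.+1 - u n) by vec_eq_by_ip I; ring.
rewrite ex eu; apply: (energy_descent gamma_gt0 lambda_gt0 L_gt0 beta_gt0
  (mb := B (x n.+1) - B z) (c := C (x n) - C z)).
- rewrite -ex; set v := (X in '[_, X]).
  suff -> : v = a2 n - - (w + B z + C z) by exact: A2_max.1 _ _ _ _ (A2_iterate n) A2z.
  by rewrite /v /a2 /fwd; vec_eq_by_ip I; field.
- rewrite -eu; set v := (X in '[X, _]).
  suff -> : v = y n.+1 - z by exact: A1_max.1 _ _ _ _ (A1_iterate n) A1z.
  by rewrite /v u_step; vec_eq_by_ip I; field.
- by rewrite -ex; exact: B_mono.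
- exact: C_coco_sqr.
- exact: B_lip_sqr.
Qed.

Lemma En_ge z w n : k1 * '[x n - z] + k2 * '[u n - w] <= En z w n.
Proof. by apply: energy_ge => //; exact: B_lip_sqr. Qed.

Lemma En_ge0 z w n : 0 <= En z w n.
Proof.
apply: le_trans (En_ge z w n).
by rewrite addr_ge0 // mulr_ge0 ?ip_ge0 // ltW // (k1_gt0, k2_gt0).
Qed.

Lemma En_noninc z w : primal_dual z w -> nonincreasing_seq (En z w).
Proof.
move=> zw; apply/nonincreasing_seqP => n; apply: le_trans (En_descent n zw).
by rewrite -addrA lerDl addr_ge0 // mulr_ge0 ?ip_ge0 // ltW // (k1_gt0, k2_gt0).
Qed.

Lemma En_cvg z w : primal_dual z w -> exists l : R, En z w n @[n --> \oo] --> l.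
Proof.
move=> zw; exists (inf (range (En z w))); apply: nonincreasing_cvgn; first exact: En_noninc.
by exists 0 => _ [n _ <-]; exact: En_ge0.
Qed.

Lemma iterates_bounded : exists K, forall n, '[x n] <= K /\ '[u n] <= K.
Proof.
have [z [w zw]] := primal_dual_exists; set E := En z w 0.
have dist_le n : '[x n - z] <= E / k1 /\ '[u n - w] <= E / k2.
  have : En z w n <= E := En_noninc zw (leq0n n); have := En_ge z w n.
  have := mulr_ge0 (ltW k1_gt0) (ip_ge0 I (x n - z)).
  have := mulr_ge0 (ltW k2_gt0) (ip_ge0 I (u n - w)).
  by rewrite !ler_pdivlMr ?(k1_gt0, k2_gt0) // ![_ * k1]mulrC ![_ * k2]mulrC; split; lra.
exists (2 * (E / k1) + 2 * '[z] + 2 * (E / k2) + 2 * '[w]) => n.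
have [xz uw] := dist_le n.
have := ip_sqr_addr I (x n - z) z; have := ip_sqr_addr I (u n - w) w; rewrite !subrK.
have := ip_ge0 I z; have := ip_ge0 I w; have := ip_ge0 I (x n - z); have := ip_ge0 I (u n - w).
by split; lra.
Qed.

Lemma increments_cvg0 :
  '[x n.+1 - x n] @[n --> \oo] --> 0 /\ '[u n.+1 - u n] @[n --> \oo] --> 0.
Proof.
have [z [w zw]] := primal_dual_exists; have [l El] := En_cvg zw.
have El' := El; rewrite -cvg_shiftS in El'.
have dE : (En z w n - En z w n.+1) @[n --> \oo] --> 0.
  by rewrite -[X in _ --> X](subrr l); apply: cvgB.
have := En_descent _ zw; have := ip_ge0 I; have := k1_gt0; have := k2_gt0.
move=> k2p k1p ge0 descent; split.
- apply: (cvg0_le (b := fun n => k1^-1 * (En z w n - En z w n.+1))) => [n|].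
    rewrite ip_ge0 ler_pdivlMl //; have := descent n.
    by have := mulr_ge0 (ltW k2p) (ge0 (u n.+1 - u n)); lra.
  exact: cvg0M.
- apply: (cvg0_le (b := fun n => k2^-1 * (En z w n - En z w n.+1))) => [n|].
    rewrite ip_ge0 ler_pdivlMl //; have := descent n.
    by have := mulr_ge0 (ltW k1p) (ge0 (x n.+1 - x n)); lra.
  exact: cvg0M.
Qed.

Lemma lagged_cvg0 : '[x n - xp n] @[n --> \oo] --> 0.
Proof. by rewrite -cvg_shiftS; exact: increments_cvg0.1. Qed.

Lemma lyap_cvg z w : primal_dual z w ->
  exists l : R, lyap I gamma lambda (x n - z) (u n - w) @[n --> \oo] --> l.
Proof.
move=> zw; have [l El] := En_cvg zw; exists l; have [K xuK] := iterates_bounded.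
apply: (cvg_perturb (h := fun n =>
    '[B (x n) - B (xp n), x n - z] - L / 2 * '[x n - xp n]) _ El) => [n|].
  by rewrite /En /energy (ip_sym I (x n - z)); ring.
apply: cvg0B; last by apply: cvg0M; exact: lagged_cvg0.
apply: (ip_cvg0 (K := 2 * K + 2 * '[z])) => [|n].
  apply: (cvg0_le (b := fun n => L ^+ 2 * '[x n - xp n])) => [n|].
    by rewrite ip_ge0 B_lip_sqr.
  by apply: cvg0M; exact: lagged_cvg0.
by apply: le_trans (ip_sqr_subr I _ _) _; have := (xuK n).1; lra.
Qed.

Lemma residual1_cvg0 : '[y n.+1 - x n.+1] @[n --> \oo] --> 0.
Proof.
have [dx0 du0] := increments_cvg0.
apply: (cvg0_le (b := fun n =>
    2 * '[x n.+1 - x n] + 2 * lambda ^+ 2 * '[u n.+1 - u n])) => [n|].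
  have -> : y n.+1 - x n.+1 = (x n.+1 - x n) + (- lambda) *: (u n.+1 - u n).
    by rewrite u_step; vec_eq_by_ip I; field.
  rewrite ip_ge0; apply: le_trans (ip_sqr_addr I _ _) _.
  by rewrite ipZl ipZr mulrA -expr2 sqrrN mulrA.
by apply: cvg0D; apply: cvg0M.
Qed.

Lemma residual2_cvg0 : '[a2 n + u n.+1 + BC (x n.+1)] @[n --> \oo] --> 0.
Proof.
have [dx0 du0] := increments_cvg0.
pose c := 8 * gamma^-2 + 4 * K_BC.
apply: (cvg0_le (b := fun n =>
    8 * '[u n.+1 - u n] + c * '[x n.+1 - x n] + 2 * L ^+ 2 * '[x n - xp n])) => [n|].
  rewrite ip_ge0 /=.
  pose P := u n.+1 - u n - gamma^-1 *: (x n.+1 - x n).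
  pose S := B (x n) - B (xp n).
  have -> : a2 n + u n.+1 + BC (x n.+1) = P + (BC (x n.+1) - BC (x n)) - S.
    by rewrite /P /S /a2 /fwd /BC; vec_eq_by_ip I; field.
  have P_le : '[P] <= 2 * '[u n.+1 - u n] + 2 * gamma^-2 * '[x n.+1 - x n].
    apply: le_trans (ip_sqr_subr I _ _) _.
    by rewrite ipZl ipZr mulrA -expr2 exprVn mulrA.
  have := ip_sqr_subr I (P + (BC (x n.+1) - BC (x n))) S.
  have := ip_sqr_addr I P (BC (x n.+1) - BC (x n)).
  have := BC_lip_sqr (x n.+1) (x n); have := B_lip_sqr (x n) (xp n).
  by rewrite /c; lra.
by apply: cvg0D; [apply: cvg0D|]; apply: cvg0M => //; exact: lagged_cvg0.
Qed.

Definition weak_cluster (U : set_system nat) xi om := [/\ primal_dual xi om,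
  forall h, '[x n, h] @[n --> U] --> '[xi, h] &
  forall h, '[u n, h] @[n --> U] --> '[om, h]].

Section Cluster.
Variable U : set_system nat.
Context {UU : UltraFilter U}.
Hypothesis ooU : \oo `<=` U.

Let null_tail (s t : nat -> H) c :
  '[s n] @[n --> \oo] --> 0 -> (forall n, '[t n] <= c) -> '[s n, t n] @[n --> U] --> 0.
Proof. by move=> s0 tc; apply: cvg_trans (ip_cvg0 s0 tc); apply: cvg_app. Qed.

Lemma weak_cvg_shift (s : nat -> H) v : '[s n.+1 - s n] @[n --> \oo] --> 0 ->
  (forall h, '[s n.+1, h] @[n --> U] --> '[v, h]) -> forall h, '[s n, h] @[n --> U] --> '[v, h].
Proof.
move=> ds sv h; apply: (cvg_perturb (f := fun n => '[s n.+1, h])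
  (h := fun n => - '[s n.+1 - s n, h])) => [n||]; [by ip_normalize I; ring | exact: sv |].
by rewrite -oppr0; apply: cvgN; exact: (null_tail (t := fun=> h) ds (fun=> lexx _)).
Qed.

(* Summing the three monotonicity inequalities at the iterates, the products of two
   weakly convergent sequences cancel; what remains is weakly convergent or vanishes. *)
Lemma cluster_inequality xi om de :
  (forall h, '[x n.+1, h] @[n --> U] --> '[xi, h]) ->
  (forall h, '[u n.+1, h] @[n --> U] --> '[om, h]) ->
  (forall h, '[BC (x n.+1), h] @[n --> U] --> '[de, h]) ->
  forall w1 v1 w2 v2 w3, A1 w1 v1 -> A2 w2 v2 ->
    0 <= '[xi - w1, om - v1] + '[xi - w2, - (om + de) - v2] + '[xi - w3, de - BC w3].
Proof.
move=> xi_lim om_lim de_lim w1 v1 w2 v2 w3 A1wv A2wv.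
have [K xuK] := iterates_bounded.
pose S n := '[y n.+1 - w1, u n.+1 - v1] + '[x n.+1 - w2, a2 n - v2]
            + '[x n.+1 - w3, BC (x n.+1) - BC w3].
have S_ge0 n : 0 <= S n.
  have := A1_max.1 _ _ _ _ (A1_iterate n) A1wv.
  have := A2_max.1 _ _ _ _ (A2_iterate n) A2wv.
  by have := BC_mono (x n.+1) w3; rewrite /S; lra.
have S_lim : S @ U --> '[xi, - v1 - v2 - BC w3] + '[om, w2 - w1] + '[de, w2 - w3]
                       + ('[w1, v1] + '[w2, v2] + '[w3, BC w3]).
  apply: (cvg_perturb
    (f := fun n => '[x n.+1, - v1 - v2 - BC w3] + '[u n.+1, w2 - w1]
                   + '[BC (x n.+1), w2 - w3] + ('[w1, v1] + '[w2, v2] + '[w3, BC w3]))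
    (h := fun n => '[y n.+1 - x n.+1, u n.+1 - v1]
                   + '[a2 n + u n.+1 + BC (x n.+1), x n.+1 - w2])) => [n||].
  - by rewrite /S; move: (a2 n) (BC (x n.+1)) (BC w3) => a d d3; ip_normalize I; ring.
  - by apply: cvgD; [apply: cvgD; [apply: cvgD|] | exact: cvg_cst];
      [exact: xi_lim | exact: om_lim | exact: de_lim].
  - apply: cvg0D; [apply: (null_tail (c := 2 * K + 2 * '[v1])) |
                   apply: (null_tail (c := 2 * K + 2 * '[w2]))].
    + exact: residual1_cvg0.
    + by move=> n; apply: le_trans (ip_sqr_subr I _ _) _; have := (xuK n.+1).2; lra.
    + exact: residual2_cvg0.
    + by move=> n; apply: le_trans (ip_sqr_subr I _ _) _; have := (xuK n.+1).1; lra.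
suff -> : '[xi - w1, om - v1] + '[xi - w2, - (om + de) - v2] + '[xi - w3, de - BC w3] =
    '[xi, - v1 - v2 - BC w3] + '[om, w2 - w1] + '[de, w2 - w3]
    + ('[w1, v1] + '[w2, v2] + '[w3, BC w3]).
  by apply: (cvgr_to_ge S_lim); apply: nearW.
by move: (BC w3) => d3; ip_normalize I; ring.
Qed.

Lemma weak_cluster_exists : exists xi om, weak_cluster U xi om.
Proof.
have [K xuK] := iterates_bounded.
have BC_bounded n : '[BC (x n.+1)] <= 2 * K_BC * K + 2 * '[BC 0].
  have := ip_sqr_addr I (BC (x n.+1) - BC 0) (BC 0); rewrite subrK.
  have := BC_lip_sqr (x n.+1) 0; rewrite subr0.
  by have := ler_wpM2l (ltW K_BC_gt0) (xuK n.+1).1; lra.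
have [xi xi_lim] := weak_ultralimit (s := fun n => x n.+1) (fun n => (xuK n.+1).1).
have [om om_lim] := weak_ultralimit (s := fun n => u n.+1) (fun n => (xuK n.+1).2).
have [de de_lim] := weak_ultralimit (s := fun n => BC (x n.+1)) BC_bounded.
have [A1xi A2xi de_eq] := maximal_monotone_limit A1_max A2_max BC_lip_sqr
  (cluster_inequality xi_lim om_lim de_lim).
have [dx0 du0] := increments_cvg0.
exists xi, om; split; first by split=> //; rewrite de_eq /BC addrA in A2xi.
- exact: weak_cvg_shift dx0 xi_lim.
- exact: weak_cvg_shift du0 om_lim.
Qed.

End Cluster.

(* [G] is affine in (x_n, u_n) by polarization, so its limits along U0 and U1 are read off the
   weak cluster points; both equal the limit of [G] along \oo. *)
Lemma weak_cluster_unique (U0 U1 : set_system nat)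
    {U0U : UltraFilter U0} {U1U : UltraFilter U1} xi0 om0 xi1 om1 :
  \oo `<=` U0 -> \oo `<=` U1 -> weak_cluster U0 xi0 om0 -> weak_cluster U1 xi1 om1 ->
  xi0 = xi1.
Proof.
move=> ooU0 ooU1 [pd0 x0 u0] [pd1 x1 u1].
have [l0 l0_lim] := lyap_cvg pd0; have [l1 l1_lim] := lyap_cvg pd1.
pose V p q := lyap I gamma lambda p q.
pose hx := (om0 - om1) - gamma^-1 *: (xi0 - xi1).
pose hu := (xi0 - xi1) - lambda *: (om0 - om1).
pose G n := V (x n - xi0) (u n - om0) - V (x n - xi1) (u n - om1).
have G_lim (U : set_system nat) (UU : UltraFilter U) xi om : \oo `<=` U ->
    (forall h, '[x n, h] @[n --> U] --> '[xi, h]) ->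
    (forall h, '[u n, h] @[n --> U] --> '[om, h]) ->
    '[xi, hx] + '[om, hu] + (V xi0 om0 - V xi1 om1) = l0 - l1.
  move=> ooU xU uU; apply: (@cvg_unique _ _ (G @ U)) => //.
    rewrite /= (eq_cvg _ _ (g := fun n => '[x n, hx] + '[u n, hu] + (V xi0 om0 - V xi1 om1))).
      by apply: cvgD; [apply: cvgD|exact: cvg_cst].
    by move=> n; exact: lyap_polar.
  by apply: cvg_trans (cvg_app _ ooU) _; apply: cvgB.
have V0 : V (xi0 - xi1) (om0 - om1) = 0.
  have := G_lim U0 U0U _ _ ooU0 x0 u0; have := G_lim U1 U1U _ _ ooU1 x1 u1.
  have : '[xi0, hx] + '[om0, hu] - ('[xi1, hx] + '[om1, hu]) =
         - 2 * V (xi0 - xi1) (om0 - om1).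
    by rewrite /V /lyap /hx /hu; ip_normalize I; move: gamma^-1 => g; field.
  lra.
have gl : 0 < gamma^-1 - lambda^-1.
  have := k1_gt0; rewrite /k1 /descent_coef1 pmulr_lgt0 ?invr_gt0 // => k1p.
  apply: (lt_le_trans k1p); rewrite -addrA gerDl -opprD oppr_le0.
  by rewrite addr_ge0 ?mulr_ge0 ?invr_ge0 // ltW.
have := lyap_ge I gamma lambda_gt0 (xi0 - xi1) (om0 - om1); rewrite -/(V _ _) V0.
rewrite pmulr_rle0 ?divr_gt0 // => sq_le0.
by apply/eqP; rewrite -subr_eq0; apply/eqP/(@ip_eq0 _ _ I)/le_anti; rewrite sq_le0 ip_ge0.
Qed.

Theorem iterates_weak_cvg : exists xbar, zer4 A1 A2 B C xbar /\ weak_cvg I x xbar.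
Proof.
have [U0 [U0U ooU0]] := ultraFilterLemma eventually_filter.
have [xi [om cl0]] := weak_cluster_exists ooU0.
have [pd0 _ _] := cl0.
exists xi; split; first exact: primal_dual_zer pd0.
move=> h; apply: cvg_from_ultra => U UU ooU.
have [xi1 [om1 cl1]] := weak_cluster_exists ooU.
have [_ x1 _] := cl1.
by rewrite (weak_cluster_unique ooU0 ooU cl0 cl1); exact: x1.
Qed.

End Algorithm.

Theorem theorem3p3 (R : realType) (H : lmodType R) (I : hilbert H)
  (A1 A2 : H -> H -> Prop) (B C : H -> H) (L beta lambda gamma : R)
  (x y u : nat -> H) (xm1 : H) :
  maximally_monotone I A1 -> maximally_monotone I A2 ->
  monotone_fun I B -> 0 < L -> L_lipschitz I L B ->
  0 < beta -> cocoercive I beta C ->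
  (exists z, zer4 A1 A2 B C z) ->
  0 < lambda ->
  0 < gamma -> gamma < lambda * beta / (beta + lambda * (2 * beta * L + 1)) ->
  (forall n : nat,
     resolvent gamma A2
       (x n - gamma *: u n - gamma *: (2 *: B (x n) - B (xprev x xm1 n)) - gamma *: C (x n))
       (x n.+1)) ->
  (forall n : nat,
     resolvent lambda A1 (2 *: x n.+1 - x n + lambda *: u n) (y n.+1)) ->
  (forall n : nat, u n.+1 = u n + lambda^-1 *: (2 *: x n.+1 - x n - y n.+1)) ->
  exists xbar : H, zer4 A1 A2 B C xbar /\ weak_cvg I x xbar.
Proof. exact: iterates_weak_cvg. Qed.
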